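(* Let $S\subseteq \mathbb{R}^n/\mathbb{R}\mathbb{1}$ be a finite set of points and let $k\le |S|$ be a positive integer. The tropical $k$-means clustering algorithm applied to $S$ with $k$ clusters (described in the context) terminates after finitely many iterations.
   Context: $\mathbb{1}=(1,\dots,1)\in\mathbb{R}^n$, and $\mathbb{R}^n/\mathbb{R}\mathbb{1}$ is the tropical torus. The asymmetric tropical distance is $d_{\Delta}(x,y)=\sum_{i=1}^n (y_i-x_i) + n\max_{i}(x_i-y_i)$ for $x,y\in\mathbb{R}^n$; it is invariant under adding multiples of $\mathbb{1}$ to either argument and so is defined on $\mathbb{R}^n/\mathbb{R}\mathbb{1}$. A tropical linear combination of points $v_1,\dots,v_l\in\mathbb{R}^n$ is a point $\max_i (v_i+\lambda_i\mathbb{1})$ (coordinatewise maximum) with $\lambda_i\in\mathbb{R}$. For a finite set $C\subseteq\mathbb{R}^n/\mathbb{R}\mathbb{1}$, the Fermat--Weber set $\mathrm{FW}(C)$ is the set of points $y\in\mathbb{R}^n/\mathbb{R}\mathbb{1}$ minimizing $\sum_{s\in C} d_\Delta(s,y)$; it is a polytope that is also closed under tropical linear combinations, and it has a unique minimal finite set of points $v_1,\dots,v_l$ (its tropical vertices) such that every point of $\mathrm{FW}(C)$ is a tropical linear combination of $v_1,\dots,v_l$. The tropical median of $C$ is the ordinary componentwise mean $\frac1l\sum_{i=1}^l v_i$ of the tropical vertices. Tropical $k$-means clustering algorithm: choose initial centroids $c_1,\dots,c_k$ (e.g. $k$ points of $S$ chosen at random); then repeat: (A-step) for each $j$, set $C_j$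 to be the set of $s\in S$ with $j=\arg\min_{i\in[k]} d_\Delta(s,c_i)$; (M-step) for each cluster $C_j$, replace $c_j$ by the tropical median of $C_j$; stop when the cluster assignments do not change. *)

From mathcomp Require Import all_boot all_order all_algebra.
From mathcomp Require Import reals.
Set Implicit Arguments. Unset Strict Implicit. Unset Printing Implicit Defensive.
Import Order.TTheory GRing.Theory Num.Theory.
Local Open Scope ring_scope.

Section Tropical.
Variables (R : realType) (n : nat).
Notation vec := 'rV[R]_n.

(* maximum of a finite family indexed by 'I_p (for p > 0 this is the
   genuine maximum: the default is one of the terms). *)
Definition maxI (p : nat) (F : 'I_p -> R) : R :=
  \big[Num.max/head 0 [seq F i | i <- enum 'I_p]]_(i < p) F i.

(* x and y represent the same point of R^n / R1 *)
Definition trop_equiv (x y : vec) : Prop :=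
  exists lam : R, forall i : 'I_n, y 0 i = x 0 i + lam.

Definition dDelta (x y : vec) : R :=
  \sum_(i < n) (y 0 i - x 0 i) + n%:R * maxI (fun i : 'I_n => x 0 i - y 0 i).

Definition FW (C : seq vec) (y : vec) : Prop :=
  forall z : vec, \sum_(s <- C) dDelta s y <= \sum_(s <- C) dDelta s z.

Definition trop_comb (W : seq vec) (y : vec) : Prop :=
  W != [::] /\
  exists lam : 'I_(size W) -> R,
    forall j : 'I_n, y 0 j = maxI (fun i : 'I_(size W) => (nth 0 W i) 0 j + lam i).

Definition generates_FW (C W : seq vec) : Prop :=
  forall y, FW C y -> trop_comb W y.

(* V (a list of pairwise distinct points of the torus) is the minimal
   finite set of tropical vertices of FW(C). *)
Definition trop_vertices (C V : seq vec) : Prop :=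
  (forall i j : 'I_(size V), trop_equiv (nth 0 V i) (nth 0 V j) -> i = j) /\
  (forall v, v \in V -> FW C v) /\
  generates_FW C V /\
  (forall W : seq vec,
     (forall w, w \in W -> exists2 v, v \in V & trop_equiv v w) ->
     generates_FW C W ->
     forall v, v \in V -> exists2 w, w \in W & trop_equiv v w).

Definition trop_median (C : seq vec) (m : vec) : Prop :=
  exists V : seq vec, trop_vertices C V /\
    trop_equiv ((size V)%:R^-1 *: \sum_(v <- V) v) m.

(* A-step: j is the arg min of i |-> dDelta s (c i), ties broken by
   taking the smallest index. *)
Definition nearest (k : nat) (c : 'I_k -> vec) (s : vec) (j : 'I_k) : Prop :=
  (forall i : 'I_k, dDelta s (c j) <= dDelta s (c i)) /\
  (forall i : 'I_k, (i < j)%N -> dDelta s (c j) < dDelta s (c i)).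

Definition cluster (m k : nat) (s : 'I_m -> vec) (a : 'I_m -> 'I_k) (j : 'I_k)
  : seq vec := [seq s i | i <- enum 'I_m & a i == j].

(* A run of tropical k-means on S = {s_0,...,s_(m-1)} with initial centroids
   c0: c t are the centroids before iteration t, a t the assignment computed
   in the A-step of iteration t, and c (t+1) the result of its M-step. *)
Definition kmeans_run (m k : nat) (s : 'I_m -> vec) (c0 : 'I_k -> vec)
    (c : nat -> 'I_k -> vec) (a : nat -> 'I_m -> 'I_k) : Prop :=
  c 0%N = c0 /\
  (forall t i, nearest (c t) (s i) (a t i)) /\
  (forall t j, if cluster s (a t) j is [::] then c t.+1 j = c t j
               else trop_median (cluster s (a t) j) (c t.+1 j)).

End Tropical.

From Pilot Require Import Defs.
From mathcomp Require Import all_boot all_order all_algebra.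
From mathcomp Require Import reals boolp classical_sets topology normedtype derive.
From mathcomp Require Import lra.
Import numFieldNormedType.Exports.
Import Order.TTheory GRing.Theory Num.Theory.

Set Implicit Arguments. Unset Strict Implicit. Unset Printing Implicit Defensive.
Local Open Scope ring_scope.

(* The k-means cost  sum_i d(s_i, c_(a i))  never increases: the A-step moves
   each point to a nearest centroid, and the M-step replaces each centroid by a
   Fermat--Weber point of its cluster.  The tropical median is such a point
   because d(s, .) is convex, so the Fermat--Weber set is closed under
   averaging; its tropical vertices are non-empty because the Fermat--Weber
   set is, the cost attaining its minimum on a box around a data point.
   The cost right after an M-step depends only on the assignment, and when an
   A-step changes the assignment without lowering the cost, the tie-breaking
   rule lowers the sum of the cluster indices.  So (cost, index sum) decreases
   lexicographically at each change of assignment, which can therefore happen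
   only finitely often. *)

Section MaxI.
Variable R : realType.

Lemma maxI_ge p (F : 'I_p -> R) i : F i <= maxI F.
Proof. exact: le_bigmax. Qed.

Lemma maxI_le p (F : 'I_p -> R) c : (0 < p)%N -> (forall i, F i <= c) -> maxI F <= c.
Proof.
case: p F => [//|p] F _ F_le; apply: bigmax_le => //.
by rewrite enum_ordSl /=.
Qed.

Lemma maxI_subr p (F : 'I_p -> R) c :
  (0 < p)%N -> maxI (fun i => F i - c) = maxI F - c.
Proof.
move=> p_gt0; apply/le_anti/andP; split.
  by apply: maxI_le => // i; rewrite lerD2r maxI_ge.
by rewrite lerBlDr; apply: maxI_le => // i; rewrite -lerBlDr (maxI_ge (fun i => F i - c)).
Qed.

Lemma continuous_bigmax {X : topologicalType} (I : Type) (r : seq I)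
    (x0 : X -> R) (F : I -> X -> R) :
  continuous x0 -> (forall i, continuous (F i)) ->
  continuous (fun x => \big[Num.max/x0 x]_(i <- r) F i x).
Proof.
move=> x0_cont F_cont; elim: r => [|i r IHr]; first by under eq_fun do rewrite big_nil.
under eq_fun do rewrite big_cons.
exact: max_fun_continuous.
Qed.

Lemma continuous_maxI {X : topologicalType} p (F : 'I_p -> X -> R) :
  (forall i, continuous (F i)) -> continuous (fun x => maxI (fun i => F i x)).
Proof.
move=> F_cont; apply: continuous_bigmax => //.
by case: (enum 'I_p) => [|i r] /=; [exact: cst_continuous | exact: F_cont].
Qed.

End MaxI.

Section TropicalDistance.
Variable R : realType.
Implicit Types (n : nat).

Lemma dDelta_sum_gaps n (s y : 'rV[R]_n) :
  dDelta s y = \sum_(i < n) (maxI (fun j => s 0 j - y 0 j) - (s 0 i - y 0 i)).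
Proof.
rewrite /dDelta [RHS]sumrB sumr_const card_ord mulr_natl addrC -sumrN.
by congr (_ + _); apply: eq_bigr => i _; rewrite opprB.
Qed.

Lemma dDelta_ge0 n (s y : 'rV[R]_n) : 0 <= dDelta s y.
Proof.
rewrite dDelta_sum_gaps; apply: sumr_ge0 => i _.
by rewrite subr_ge0 (maxI_ge (fun j => s 0 j - y 0 j)).
Qed.

Lemma coord_gap_le_dDelta n (s y : 'rV[R]_n) i j :
  (s 0 j - y 0 j) - (s 0 i - y 0 i) <= dDelta s y.
Proof.
rewrite dDelta_sum_gaps (bigD1 i) //= -[leLHS]addr0 lerD //.
  by rewrite lerD2r (maxI_ge (fun j => s 0 j - y 0 j)).
apply: sumr_ge0 => l _.
by rewrite subr_ge0 (maxI_ge (fun j => s 0 j - y 0 j)).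
Qed.

Lemma dDelta_trop_equiv n (s y y' : 'rV[R]_n) :
  trop_equiv y y' -> dDelta s y' = dDelta s y.
Proof.
move=> [l y'E]; rewrite !dDelta_sum_gaps; apply: eq_bigr => i _.
have n_gt0 : (0 < n)%N by apply: leq_ltn_trans (ltn_ord i).
have gapE j : s 0 j - y' 0 j = (s 0 j - y 0 j) - l by rewrite y'E opprD addrA.
have -> : maxI (fun j => s 0 j - y' 0 j) = maxI (fun j => s 0 j - y 0 j) - l.
  by rewrite -maxI_subr //; congr maxI; apply: funext => j; rewrite gapE.
by rewrite gapE opprB addrA subrK.
Qed.

Lemma continuous_dDelta n (s : 'rV[R]_n) : continuous (dDelta s).
Proof.
have coord i : continuous (fun y : 'rV[R]_n => y 0 i) by exact: coord_continuous.
have sum_cont : continuous (fun y : 'rV[R]_n => \sum_(i < n) (y 0 i - s 0 i)).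
  apply: continuous_big => [|i _ y]; first exact: add_continuous.
  exact: continuousB (coord i y) (@cst_continuous _ _ (s 0 i) y).
have max_cont : continuous (fun y : 'rV[R]_n => maxI (fun i => s 0 i - y 0 i)).
  apply: continuous_maxI => i y.
  exact: continuousB (@cst_continuous _ _ (s 0 i) y) (coord i y).
move=> y; exact: continuousD (sum_cont y)
  (continuousM (@cst_continuous _ _ (n%:R : R) y) (max_cont y)).
Qed.

End TropicalDistance.

Lemma mean_cst (R : realType) (T : eqType) (V : seq T) (x : R) :
  V != [::] -> (size V)%:R^-1 * \sum_(v <- V) x = x.
Proof.
move=> V0; rewrite big_const_seq count_predT iter_addr addr0 -[x *+ _]mulr_natl.
by rewrite mulKf // pnatr_eq0 size_eq0.
Qed.

Section FermatWeber.
Variable R : realType.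
Implicit Types (n : nat).

Definition centroid n (V : seq 'rV[R]_n) : 'rV[R]_n :=
  (size V)%:R^-1 *: \sum_(v <- V) v.

Lemma dDelta_centroid_le n (V : seq 'rV[R]_n) s :
  V != [::] -> dDelta s (centroid V) <= (size V)%:R^-1 * \sum_(v <- V) dDelta s v.
Proof.
move=> V0; set N := (size V)%:R.
have gapE j : s 0 j - centroid V 0 j = N^-1 * \sum_(v <- V) (s 0 j - v 0 j).
  by rewrite mxE summxE sumrB mulrBr mean_cst.
rewrite dDelta_sum_gaps (eq_bigr _ (fun v _ => dDelta_sum_gaps s v)).
rewrite exchange_big mulr_sumr; apply: ler_sum => i _ /=.
rewrite sumrB mulrBr -gapE lerD2r.
have n_gt0 : (0 < n)%N by apply: leq_ltn_trans (ltn_ord i).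
apply: maxI_le => // j; rewrite gapE ler_wpM2l ?invr_ge0 ?ler0n //.
by apply: ler_sum => v _; rewrite (maxI_ge (fun j => s 0 j - v 0 j)).
Qed.

Lemma FW_trop_equiv n (C : seq 'rV[R]_n) y y' : trop_equiv y y' -> FW C y -> FW C y'.
Proof.
move=> yy' FWy z; under eq_bigr do rewrite (dDelta_trop_equiv _ yy').
exact: FWy.
Qed.

Lemma FW_centroid n (C V : seq 'rV[R]_n) :
  V != [::] -> (forall v, v \in V -> FW C v) -> FW C (centroid V).
Proof.
move=> V0 V_FW z.
apply: (@le_trans _ _ (\sum_(x <- C) (size V)%:R^-1 * \sum_(v <- V) dDelta x v)).
  by apply: ler_sum => x _; exact: dDelta_centroid_le.
rewrite -mulr_sumr exchange_big /= -(mean_cst (\sum_(x <- C) dDelta x z) V0).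
rewrite ler_wpM2l ?invr_ge0 ?ler0n // big_seq [leRHS]big_seq.
by apply: ler_sum => v /V_FW; apply.
Qed.

Lemma FW_exists n (C : seq 'rV[R]_n) : exists y, FW C y.
Proof.
case: C => [|s0 C]; first by exists 0 => z; rewrite !big_nil.
case: n s0 C => [|n] s0 C; first by exists 0 => z; rewrite (thinmx0 z) lexx.
pose F y := \sum_(x <- s0 :: C) dDelta x y.
pose K := F s0.
have K_ge0 : 0 <= K by apply: sumr_ge0 => x _; exact: dDelta_ge0.
pose B := [set y : 'rV[R]_n.+1 |
  forall i, `[s0 0 i - K, s0 0 i + K]%classic (y 0 i)]%classic.
have B_s0 : B s0 by move=> i /=; rewrite in_itv /=; apply/andP; split; lra.
have F_cont : continuous F.
  by apply: continuous_big => [|x _]; [exact: add_continuous | exact: continuous_dDelta].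
have [c _ c_min] := EVT_min_rV (ex_intro _ s0 B_s0)
  (rV_compact (fun i => @segment_compact R _ _)) (continuous_subspaceT F_cont).
exists c => z; change (F c <= F z).
(* Once z is normalised to agree with s0 in coordinate 0, F z' <= F s0 forces
   every coordinate of z' to within F s0 of s0, i.e. into the box B. *)
pose z' := z + const_mx (s0 0 ord0 - z 0 ord0).
have zz' : trop_equiv z z' by exists (s0 0 ord0 - z 0 ord0) => i; rewrite !mxE.
have <- : F z' = F z by apply: eq_bigr => x _; exact: dDelta_trop_equiv.
have [Fz'_le|Fz'_gt] := leP (F z') K; last first.
  by apply: le_trans (c_min s0 _) (ltW Fz'_gt); rewrite in_setE.
apply: c_min; rewrite in_setE => i /=; rewrite in_itv /=.
have d_le : dDelta s0 z' <= F z'.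
  by rewrite /F big_cons lerDl; apply: sumr_ge0 => x _; exact: dDelta_ge0.
have := coord_gap_le_dDelta s0 z' ord0 i; have := coord_gap_le_dDelta s0 z' i ord0.
rewrite /z' !mxE subrKC; lra.
Qed.

Lemma trop_median_FW n (C : seq 'rV[R]_n) x : trop_median C x -> FW C x.
Proof.
move=> [V [[_ [V_FW [V_gen _]]] Vx]].
have [y /V_gen [V0 _]] := FW_exists C.
exact: FW_trop_equiv Vx (FW_centroid V0 V_FW).
Qed.

End FermatWeber.

Lemma descent_stationary (T : finType) d (X : porderType d)
    (a : nat -> T) (P : nat -> X) :
  (forall t u, a t = a u -> P t = P u) ->
  (forall t, a t.+1 != a t -> (P t.+1 < P t)%O) ->
  exists t, a t.+1 = a t.
Proof.
move=> P_of_a P_step; apply: contrapT => no_fix.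
have P_lt t : (P t.+1 < P t)%O.
  by apply: P_step; apply/eqP => fix_t; apply: no_fix; exists t.
have P_decr t u : (t < u)%N -> (P u < P t)%O.
  elim: u => // u IHu; rewrite ltnS leq_eqVlt => /predU1P[<-|/IHu]; first exact: P_lt.
  exact: lt_trans (P_lt u).
have a_inj : injective (fun t : 'I_#|T|.+1 => a t).
  move=> t u /P_of_a Ptu; apply: val_inj.
  by case: (ltngtP t u) => // /P_decr; rewrite Ptu ltxx.
by have := leq_card _ a_inj; rewrite card_ord ltnn.
Qed.

Section KMeans.
Variables (R : realType) (n m k : nat) (s : 'I_m -> 'rV[R]_n).

Definition kmeans_cost (a : 'I_m -> 'I_k) (c : 'I_k -> 'rV[R]_n) : R :=
  \sum_(i < m) dDelta (s i) (c (a i)).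

Definition median_update (a : 'I_m -> 'I_k) (c c' : 'I_k -> 'rV[R]_n) : Prop :=
  forall j, if Defs.cluster s a j is [::] then c' j = c j
            else trop_median (Defs.cluster s a j) (c' j).

Lemma kmeans_cost_cluster a c :
  kmeans_cost a c = \sum_(j < k) \sum_(x <- Defs.cluster s a j) dDelta x (c j).
Proof.
rewrite /kmeans_cost (partition_big a xpredT) //=; apply: eq_bigr => j _.
rewrite /Defs.cluster big_map big_filter big_enum_cond /=.
by apply: eq_bigr => i /eqP ->.
Qed.

Lemma median_update_cost_min a c c' d :
  median_update a c c' -> kmeans_cost a c' <= kmeans_cost a d.
Proof.
move=> upd; rewrite !kmeans_cost_cluster; apply: ler_sum => j _.
have := upd j; case: Defs.cluster => [_|x C /trop_median_FW]; last exact.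
by rewrite !big_nil.
Qed.

Lemma median_update_cost_eq a c c' d d' :
  median_update a c c' -> median_update a d d' -> kmeans_cost a c' = kmeans_cost a d'.
Proof.
move=> upd_c upd_d; apply/le_anti.
by rewrite (median_update_cost_min _ upd_c) (median_update_cost_min _ upd_d).
Qed.

Lemma nearest_cost_le c b a :
  (forall i, nearest c (s i) (b i)) -> kmeans_cost b c <= kmeans_cost a c.
Proof. by move=> near; apply: ler_sum => i _; exact: (near i).1. Qed.

Lemma nearest_cost_eq c b a :
  (forall i, nearest c (s i) (b i)) -> kmeans_cost b c = kmeans_cost a c ->
  forall i, (b i <= a i)%N.
Proof.
move=> near cost_eq i.
have gap0 : dDelta (s i) (c (a i)) - dDelta (s i) (c (b i)) = 0.
  pose gap l := dDelta (s l) (c (a l)) - dDelta (s l) (c (b l)).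
  apply: (@psumr_eq0P _ _ xpredT gap) => // [l _|]; first by rewrite subr_ge0 (near l).1.
  by rewrite sumrB -!/(kmeans_cost _ c) cost_eq subrr.
rewrite leqNgt; apply/negP => /(near i).2.
by move/eqP: gap0; rewrite subr_eq0 => /eqP ->; rewrite ltxx.
Qed.

Lemma kmeans_potential_decrease a c a' c' :
  (forall i, nearest c (s i) (a' i)) -> median_update a' c c' -> a' <> a ->
  (((kmeans_cost a' c', (\sum_(i < m) a' i)%N) : R *l nat)
    < (kmeans_cost a c, (\sum_(i < m) a i)%N))%O.
Proof.
move=> near upd a'_neq.
have cost_le := le_trans (median_update_cost_min c upd) (nearest_cost_le a near).
rewrite ltxi_pair cost_le /=; apply/implyP => cost_ge.
have cost_eq : kmeans_cost a' c = kmeans_cost a c.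
  apply/le_anti; rewrite nearest_cost_le //=.
  exact: le_trans cost_ge (median_update_cost_min c upd).
have a'_le := nearest_cost_eq near cost_eq.
have [i a'i_neq] : exists i, a' i <> a i.
  by apply/existsNP => a'_eq; apply: a'_neq; apply: funext.
rewrite ltEnat /= (bigD1 i) //= [X in (_ < X)%N](bigD1 i) //= -addSn leq_add //.
  by rewrite ltn_neqAle a'_le andbT; apply/eqP => /val_inj.
exact: leq_sum.
Qed.

End KMeans.

Theorem mainTheorem2 (R : realType) (n m k : nat) (s : 'I_m -> 'rV[R]_n)
  (Hs : forall i j : 'I_m, trop_equiv (s i) (s j) -> i = j)
  (Hk : (0 < k)%N) (HkS : (k <= m)%N)
  (c0 : 'I_k -> 'rV[R]_n) :
  forall (c : nat -> 'I_k -> 'rV[R]_n) (a : nat -> 'I_m -> 'I_k),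
    kmeans_run s c0 c a ->
    exists t : nat, a t.+1 = a t.
Proof.
move=> c a [_ [a_near c_upd]].
pose code t := [ffun i => a t i].
have code_inj t u : code t = code u -> a t = a u.
  by move/ffunP => E; apply: funext => i; have := E i; rewrite !ffunE.
pose P t : R *l nat := (kmeans_cost s (a t) (c t.+1), (\sum_(i < m) a t i)%N).
have [t /code_inj a_fix] : exists t, code t.+1 = code t.
  apply: (descent_stationary (P := P)) => [t u /code_inj a_tu | t code_neq].
    have upd_t : median_update s (a u) (c t) (c t.+1) by rewrite -a_tu; exact: c_upd.
    by rewrite /P a_tu (median_update_cost_eq upd_t (c_upd u)).
  apply: kmeans_potential_decrease (a_near t.+1) (c_upd t.+1) _.
  by move=> a_eq; move/eqP: code_neq; apply; rewrite /code a_eq.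
by exists t.
Qed.
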